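(* If $\gamma_*>0$ and $P[\mu_1,\mu_2]$ is a nonsingular matrix, then $\mathrm{rank}(\hat V(\gamma_* ))=2$, where $\hat V(\gamma_* )=[v_1(\gamma_* )\ \ v_2(\gamma_* )-\theta_*v_1(\gamma_* )]$ and $\theta_*=\frac{\gamma_*}{\mu_1-\mu_2}$.
   Context: Let $P(\lambda)=\sum_{j=0}^m A_j\lambda^j$ be an $n\times n$ matrix polynomial with $\det A_m\neq0$, let $\mu_1\neq\mu_2$ be complex numbers, $P[\mu_1,\mu_2]=\frac{P(\mu_1)-P(\mu_2)}{\mu_1-\mu_2}$, and $F[P(\mu_1,\mu_2);\gamma]=\begin{bmatrix} P(\mu_1) & 0\\ \gamma P[\mu_1,\mu_2] & P(\mu_2)\end{bmatrix}$. Let $\gamma_*$ be a point where $s_{2n-1}(F[P(\mu_1,\mu_2);\gamma])$ attains its maximum $s_*>0$ over $\gamma\ge0$. Let $\begin{bmatrix} u_1(\gamma_* )\\ u_2(\gamma_* )\end{bmatrix},\begin{bmatrix} v_1(\gamma_* )\\ v_2(\gamma_* )\end{bmatrix}$ ($u_k,v_k\in\mathbb{C}^n$) be a pair of left and right singular vectors of $s_*$ chosen such that $u_2(\gamma_* )^*P[\mu_1,\mu_2]v_1(\gamma_* )=0$, $u_2(\gamma_* )^*u_1(\gamma_* )=v_2(\gamma_* )^*v_1(\gamma_* )$, and $[u_1\ u_2]^*[u_1\ u_2]=[v_1\ v_2]^*[v_1\ v_2]$ at $\gamma_*$ (such a pair exists). *)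

From HB Require Import structures.
From mathcomp Require Import all_boot all_order all_algebra.
From mathcomp.real_closed Require Import complex.
From mathcomp Require Import reals.
Set Implicit Arguments. Unset Strict Implicit. Unset Printing Implicit Defensive.
Import Order.TTheory GRing.Theory Num.Theory.
Local Open Scope ring_scope.

Definition adjmx (C : numClosedFieldType) m n (A : 'M[C]_(m, n)) : 'M[C]_(n, m) :=
  (map_mx (@Num.conj C) A)^T.

Definition mxpoly_eval (C : numClosedFieldType) n m (A : 'I_m.+1 -> 'M[C]_n) (x : C)
  : 'M[C]_n := \sum_(j < m.+1) (x ^+ j) *: A j.

Definition mxpoly_dd (C : numClosedFieldType) n m (A : 'I_m.+1 -> 'M[C]_n) (mu1 mu2 : C)
  : 'M[C]_n := (mu1 - mu2)^-1 *: (mxpoly_eval A mu1 - mxpoly_eval A mu2).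

Definition Fmat (C : numClosedFieldType) n m (A : 'I_m.+1 -> 'M[C]_n) (mu1 mu2 g : C)
  : 'M[C]_(n + n) :=
  block_mx (mxpoly_eval A mu1) 0 (g *: mxpoly_dd A mu1 mu2) (mxpoly_eval A mu2).

(* sv_seq M s : s is the list of the singular values of M in nonincreasing
   order, counted with multiplicity, i.e. the nonnegative square roots of the
   eigenvalues (with algebraic multiplicity) of M^* M. *)
Definition sv_seq (C : numClosedFieldType) N (M : 'M[C]_N) (s : seq C) : Prop :=
  [/\ all (fun x => 0 <= x) s,
      sorted (fun x y => y <= x) s &
      char_poly (adjmx M *m M) = \prod_(x <- s) ('X - (x ^+ 2)%:P)].

(* is_sv M k x : x is the k-th largest singular value s_k(M) (1-based k). *)
Definition is_sv (C : numClosedFieldType) N (M : 'M[C]_N) (k : nat) (x : C) : Prop :=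
  exists s : seq C, [/\ sv_seq M s, (0 < k)%N, (k <= size s)%N & x = nth 0 s k.-1].

From HB Require Import structures.
From mathcomp Require Import all_boot all_order all_algebra.
From mathcomp.real_closed Require Import complex.
From mathcomp Require Import reals.
Import Order.TTheory GRing.Theory Num.Theory.
Local Open Scope ring_scope.

(* Write d = mu_1 - mu_2 and F v = s u, F^* u = s v blockwise.  If v_2 = c v_1,
   the Gram condition forces u_2 = c u_1; the second block row of F v = s u
   then gives gamma = c d, and the first block row of F^* u = s v gives
   conj(d) + gamma c = 0, P[mu_1,mu_2] being nonsingular in both cases.
   Multiplying the latter by d yields |d|^2 + gamma^2 = 0, impossible for
   gamma > 0.  So v_1 != 0 (again by the Gram condition) and v_2 is not a
   multiple of v_1, whence v_1 and v_2 - theta v_1 are independent for any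
   theta. *)

Section ConjugateTranspose.

Variable C : numClosedFieldType.

Lemma adjmxM m n p (A : 'M[C]_(m, n)) (B : 'M[C]_(n, p)) :
  adjmx (A *m B) = adjmx B *m adjmx A.
Proof. by rewrite /adjmx map_mxM trmx_mul. Qed.

Lemma adjmxD m n (A B : 'M[C]_(m, n)) : adjmx (A + B) = adjmx A + adjmx B.
Proof. by rewrite /adjmx map_mxD linearD. Qed.

Lemma adjmxN m n (A : 'M[C]_(m, n)) : adjmx (- A) = - adjmx A.
Proof. by rewrite /adjmx map_mxN linearN. Qed.

Lemma adjmxB m n (A B : 'M[C]_(m, n)) : adjmx (A - B) = adjmx A - adjmx B.
Proof. by rewrite adjmxD adjmxN. Qed.

Lemma adjmxZ m n a (A : 'M[C]_(m, n)) : adjmx (a *: A) = a^* *: adjmx A.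
Proof. by rewrite /adjmx map_mxZ linearZ. Qed.

Lemma adjmxK m n (A : 'M[C]_(m, n)) : adjmx (adjmx A) = A.
Proof. by apply/matrixP => i j; rewrite !mxE conjCK. Qed.

Lemma adjmx0 m n : adjmx (0 : 'M[C]_(m, n)) = 0.
Proof. by apply/matrixP => i j; rewrite !mxE conjC0. Qed.

Lemma adjmx_block m1 m2 n1 n2 (A : 'M[C]_(m1, n1)) (B : 'M[C]_(m1, n2))
    (D : 'M[C]_(m2, n1)) (E : 'M[C]_(m2, n2)) :
  adjmx (block_mx A B D E) = block_mx (adjmx A) (adjmx D) (adjmx B) (adjmx E).
Proof. by rewrite /adjmx map_block_mx tr_block_mx. Qed.

Lemma adjmx_col m1 m2 n (A : 'M[C]_(m1, n)) (B : 'M[C]_(m2, n)) :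
  adjmx (col_mx A B) = row_mx (adjmx A) (adjmx B).
Proof. by rewrite /adjmx map_col_mx tr_col_mx. Qed.

Lemma adjmx_row m n1 n2 (A : 'M[C]_(m, n1)) (B : 'M[C]_(m, n2)) :
  adjmx (row_mx A B) = col_mx (adjmx A) (adjmx B).
Proof. by rewrite /adjmx map_row_mx tr_row_mx. Qed.

Lemma adjmx_unitmx n (A : 'M[C]_n) : (adjmx A \in unitmx) = (A \in unitmx).
Proof. by rewrite /adjmx unitmx_tr map_unitmx. Qed.

Lemma adjmx_mul_self_eq0 m n (A : 'M[C]_(m, n)) : (adjmx A *m A == 0) = (A == 0).
Proof.
apply/eqP/eqP => [AA0|->]; last by rewrite mulmx0.
apply/matrixP => i j; apply/eqP; rewrite mxE -normr_eq0 -sqrf_eq0.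
have /matrixP/(_ j j) := AA0; rewrite !mxE.
have -> : \sum_k adjmx A j k * A k j = \sum_k `|A k j| ^+ 2.
  by apply: eq_bigr => k _; rewrite !mxE normCK mulrC.
by move/psumr_eq0P => -> //= k _; rewrite exprn_ge0.
Qed.

End ConjugateTranspose.

Section MatrixKernels.

Variable C : numClosedFieldType.

Lemma unitmx_mulmx_eq0 n p (D : 'M[C]_n) (X : 'M[C]_(n, p)) :
  D \in unitmx -> (D *m X == 0) = (X == 0).
Proof.
move=> uD; apply/eqP/eqP => [DX0|->]; last exact: mulmx0.
by rewrite -(mulKmx uD X) DX0 mulmx0.
Qed.

(* (U w)^* (U w) = w^* (U^* U) w only depends on the Gram matrix U^* U. *)
Lemma gram_eq_mulmx_eq0 m k p (U V : 'M[C]_(m, k)) (W : 'M[C]_(k, p)) :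
  adjmx U *m U = adjmx V *m V -> (U *m W == 0) = (V *m W == 0).
Proof.
move=> gramUV; rewrite -adjmx_mul_self_eq0 -[in RHS]adjmx_mul_self_eq0.
by rewrite !adjmxM -!mulmxA (mulmxA (adjmx U)) (mulmxA (adjmx V)) gramUV.
Qed.

Lemma rank_row_mx_cV2 n (x y : 'cV[C]_n) :
  x != 0 -> (forall c, y != c *: x) -> \rank (row_mx x y) = 2%N.
Proof.
move=> x_neq0 y_indep; rewrite -mxrank_tr tr_row_mx.
apply/eqP; rewrite -[2%N]/(1 + 1)%N -/(row_free _) -kermx_eq0 -submx0.
apply/row_subP => i; rewrite submx0.
have := row_sub i (kermx (col_mx x^T y^T)); rewrite sub_kermx => /eqP.
rewrite -[row i _]hsubmxK mul_row_col.
rewrite [lsubmx _]mx11_scalar [rsubmx _]mx11_scalar !mul_scalar_mx.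
set a := lsubmx _ 0 0; set b := rsubmx _ 0 0 => /(congr1 trmx).
rewrite linearD !linearZ /= !trmxK linear0 => comb0.
have b0 : b = 0.
  apply: contraTeq (y_indep (- (a / b))) => b_neq0; apply/negPn/eqP.
  apply: (scalerI b_neq0); apply/eqP.
  by rewrite scalerA mulrN mulrCA divff // mulr1 scaleNr -addr_eq0 addrC comb0.
have a0 : a = 0.
  apply/eqP; move/eqP: comb0; rewrite b0 scale0r addr0.
  by rewrite scaler_eq0 (negbTE x_neq0) orbF.
by rewrite a0 b0 !raddf0 row_mx0.
Qed.

End MatrixKernels.

Section SingularPairOfTwoPointMatrix.

Variables (C : numClosedFieldType) (n : nat).
Variables (P1 P2 D : 'M[C]_n) (d g s : C) (u1 u2 v1 v2 : 'cV[C]_n).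

Local Notation F := (block_mx P1 0 (g *: D) P2).

Hypothesis g_gt0 : 0 < g.
Hypothesis D_unit : D \in unitmx.
Hypothesis P1_sub_P2 : P1 - P2 = d *: D.
Hypothesis right_sv : F *m col_mx v1 v2 = s *: col_mx u1 u2.
Hypothesis left_sv : adjmx F *m col_mx u1 u2 = s *: col_mx v1 v2.
Hypothesis u_neq0 : col_mx u1 u2 != 0.
Hypothesis gram_uv :
  adjmx (row_mx u1 u2) *m row_mx u1 u2 = adjmx (row_mx v1 v2) *m row_mx v1 v2.

Let g_neq0 : g != 0. Proof. by rewrite gt_eqF. Qed.

Let conj_g : g^* = g. Proof. exact/conj_Creal/gtr0_real. Qed.

Lemma right_sv_blocks :
  P1 *m v1 = s *: u1 /\ g *: (D *m v1) + P2 *m v2 = s *: u2.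
Proof.
move: right_sv; rewrite mul_block_col mul0mx addr0 scale_col_mx -scalemxAl.
by case/eq_col_mx.
Qed.

Lemma left_sv_blocks :
  adjmx P1 *m u1 + g *: (adjmx D *m u2) = s *: v1 /\ adjmx P2 *m u2 = s *: v2.
Proof.
move: left_sv; rewrite adjmx_block adjmx0 mul_block_col mul0mx add0r.
by rewrite scale_col_mx adjmxZ conj_g -scalemxAl; case/eq_col_mx.
Qed.

Lemma gram_uv_mulmx_eq0 (a b : 'M[C]_1) :
  (u1 *m a + u2 *m b == 0) = (v1 *m a + v2 *m b == 0).
Proof. by rewrite -!mul_row_col; exact: gram_eq_mulmx_eq0. Qed.

Lemma right_sv_top_neq0 : v1 != 0.
Proof.
apply: contraNneq u_neq0 => v1_0.
have u1_0 : u1 = 0.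
  apply/eqP; have := gram_uv_mulmx_eq0 1%:M 0.
  by rewrite !mulmx0 !addr0 !mulmx1 v1_0 eqxx => ->.
have u2_0 : u2 = 0.
  have [+ _] := left_sv_blocks; rewrite u1_0 v1_0 mulmx0 add0r scaler0 => /eqP.
  by rewrite scaler_eq0 (negbTE g_neq0) unitmx_mulmx_eq0 ?adjmx_unitmx // => /eqP.
by rewrite u1_0 u2_0 col_mx0.
Qed.

Section Proportional.

Variable c : C.
Hypothesis v2_prop : v2 = c *: v1.

Lemma left_sv_bottom_prop : u2 = c *: u1.
Proof.
apply/eqP; rewrite -subr_eq0.
have := gram_uv_mulmx_eq0 (- c)%:M 1%:M.
by rewrite !mulmx1 !mul_mx_scalar v2_prop !scaleNr addNr addrC eqxx => ->.
Qed.

Lemma prop_right_sv_scale : g = c * d.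
Proof.
have [Pv1 Pv2] := right_sv_blocks.
have Dv1_neq0 : D *m v1 != 0 by rewrite unitmx_mulmx_eq0 // right_sv_top_neq0.
have : (g - c * d) *: (D *m v1) = 0.
  rewrite scalerBl -scalerA [d *: _]scalemxAl -P1_sub_P2 mulmxBl scalerBr Pv1.
  move: Pv2; rewrite v2_prop left_sv_bottom_prop -scalemxAr scalerA [s * c]mulrC.
  by rewrite -scalerA => <-; rewrite addrK scalemxAl subrr.
by move/eqP; rewrite scaler_eq0 (negbTE Dv1_neq0) orbF subr_eq0 => /eqP.
Qed.

Lemma prop_left_sv_scale : d^* + g * c = 0.
Proof.
have [P1u P2u] := left_sv_blocks.
have c_neq0 : c != 0.
  by apply: contra_neq g_neq0; rewrite prop_right_sv_scale => ->; rewrite mul0r.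
have P2u1 : adjmx P2 *m u1 = s *: v1.
  move: P2u; rewrite left_sv_bottom_prop v2_prop -scalemxAr scalerA [s * c]mulrC -scalerA.
  exact: scalerI.
have u1_neq0 : u1 != 0.
  by apply: contraNneq u_neq0 => u1_0; rewrite left_sv_bottom_prop u1_0 scaler0 col_mx0.
have Du1_neq0 : adjmx D *m u1 != 0 by rewrite unitmx_mulmx_eq0 ?adjmx_unitmx.
have : (d^* + g * c) *: (adjmx D *m u1) = 0.
  rewrite scalerDl scalemxAl -adjmxZ -P1_sub_P2 adjmxB mulmxBl P2u1 -P1u.
  by rewrite left_sv_bottom_prop -scalemxAr scalerA opprD addrA subrr sub0r addNr.
by move/eqP; rewrite scaler_eq0 (negbTE Du1_neq0) orbF => /eqP.
Qed.

Lemma right_sv_bottom_not_prop : False.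
Proof.
have : d * d^* + g ^+ 2 = 0.
  by rewrite expr2 {2}prop_right_sv_scale mulrA [d * _]mulrC -mulrDl
     prop_left_sv_scale mul0r.
apply/eqP; rewrite -normCK lt0r_neq0 // ltr_wpDl ?exprn_ge0 ?normr_ge0 //.
by rewrite exprn_gt0.
Qed.

End Proportional.

Lemma rank_right_sv_shear t : \rank (row_mx v1 (v2 - t *: v1)) = 2%N.
Proof.
apply: rank_row_mx_cV2 => [|c]; first exact: right_sv_top_neq0.
by rewrite subr_eq -scalerDl; apply/eqP => /right_sv_bottom_not_prop.
Qed.

End SingularPairOfTwoPointMatrix.

Local Open Scope complex_scope.

Theorem corollary2 (R : realType) (n m : nat) (A : 'I_m.+1 -> 'M[R[i]]_n)
  (mu1 mu2 : R[i]) (gs ss : R[i]) (u v : 'cV[R[i]]_(n + n)) :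
  \det (A ord_max) != 0 ->
  mu1 != mu2 ->
  0 <= gs ->
  is_sv (Fmat A mu1 mu2 gs) (2 * n).-1 ss ->
  (forall g s, 0 <= g -> is_sv (Fmat A mu1 mu2 g) (2 * n).-1 s -> s <= ss) ->
  0 < ss ->
  Fmat A mu1 mu2 gs *m v = ss *: u ->
  adjmx (Fmat A mu1 mu2 gs) *m u = ss *: v ->
  adjmx u *m u = 1 ->
  adjmx v *m v = 1 ->
  adjmx (dsubmx u) *m mxpoly_dd A mu1 mu2 *m usubmx v = 0 ->
  adjmx (dsubmx u) *m usubmx u = adjmx (dsubmx v) *m usubmx v ->
  adjmx (row_mx (usubmx u) (dsubmx u)) *m row_mx (usubmx u) (dsubmx u)
    = adjmx (row_mx (usubmx v) (dsubmx v)) *m row_mx (usubmx v) (dsubmx v) ->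
  0 < gs ->
  mxpoly_dd A mu1 mu2 \in unitmx ->
  \rank (row_mx (usubmx v)
           (dsubmx v - (gs / (mu1 - mu2)) *: usubmx v)) = 2%N.
Proof.
move=> _ mu12 _ _ _ _ right_sv left_sv u_unit _ _ _ gram_uv gs_gt0 dd_unit.
have P1_sub_P2 : mxpoly_eval A mu1 - mxpoly_eval A mu2
    = (mu1 - mu2) *: mxpoly_dd A mu1 mu2.
  by rewrite /mxpoly_dd scalerA divff ?scale1r // subr_eq0.
have u_neq0 : u != 0.
  by apply: contra_eq_neq u_unit => ->; rewrite mulmx0 eq_sym oner_neq0.
rewrite -[u]vsubmxK -[v]vsubmxK /Fmat in right_sv left_sv u_neq0.
exact: rank_right_sv_shear gs_gt0 dd_unit P1_sub_P2 right_sv left_sv u_neq0 gram_uv _.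
Qed.
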